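(* Assume the reduced model family $(V_k)_{k=1,\dots,K}$ is $\sigma$-admissible for some $\sigma>0$. Let $u^*(w)$ be the estimator obtained by surrogate model selection. Then $$E_{wc}:=\sup_{u\in\mathcal M}\|u-u^*(P_Wu)\|\le \delta_{\kappa\sigma},\qquad \kappa=R/r.$$ In particular, for the idealized selection in which $k^*(w)$ minimizes $\operatorname{dist}(u_k^*(w),\mathcal M)$ over $k$ (i.e. $\mathcal S=\operatorname{dist}$, $r=R=1$), one has $E_{wc}\le\delta_\sigma$.
   Context: Let $V$ be a real Hilbert space with norm $\|\cdot\|$. Let $Y\subset\mathbb R^d$ be compact and let $y\mapsto u(y)$ be a continuous map from $Y$ to $V$. Set $\mathcal M=\{u(y):y\in Y\}$, which is compact. Let $W\subset V$ be a linear subspace of finite dimension $m$, let $P_W$ be the orthogonal projection onto $W$, and let $W^\perp$ be its orthogonal complement. For $w\in W$ put $V_w=w+W^\perp$. For $\sigma\ge 0$ define - $\mathcal M_\sigma=\{v\in V:\operatorname{dist}(v,\mathcal M)\le\sigma\}$; - $\delta_\sigma=\sup\{\|u-v\|: u,v\in\mathcal M_\sigma,\ u-v\in W^\perp\}$. For a finite-dimensional subspace $E\subset V$ let $\mu(E,W)=\sup_{v\in E\setminus\{0\}}\|v\|/\|P_Wv\|$, with the conventions $\mu(\{0\},W)=1$ and $\mu(E,W)=+\infty$ if $E\cap W^\perp\ne\{0\}$. A reduced model family consists of: - sets $\mathcal M_1,\dots,\mathcal M_K$ with $\mathcal M=\bigcup_{k=1}^K\mathcal M_k$; - affine spaces $V_k=\bar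 u_k+\bar V_k$, where $\bar u_k\in V$ and $\bar V_k$ is a linear subspace of dimension $n_k\le m$; - numbers $\varepsilon_k\ge\sup_{u\in\mathcal M_k}\operatorname{dist}(u,V_k)$; - constants $\mu_k=\mu(\bar V_k,W)<\infty$. The family is $\sigma$-admissible if $\mu_k\varepsilon_k\le\sigma$ for all $k$. It is $(\varepsilon,\mu)$-admissible if $\varepsilon_k\le\varepsilon$ and $\mu_k\le\mu$ for all $k$. For $w\in W$ the PBDW estimators are $u_k^*(w)=\operatorname{argmin}\{\operatorname{dist}(v,V_k): v\in V_w\}$, $k=1,\dots,K$ (the minimizer is unique). A surrogate is a function $\mathcal S(\cdot,\mathcal M):V\to[0,\infty)$ with $r\operatorname{dist}(v,\mathcal M)\le\mathcal S(v,\mathcal M)\le R\operatorname{dist}(v,\mathcal M)$ for all $v\in V$, where $0<r\le R$ are constants; set $\kappa=R/r$. Surrogate model selection picks $k^*(w)$ as any minimizer of $k\mapsto\mathcal S(u_k^*(w),\mathcal M)$ over $\{1,\dots,K\}$ and sets $u^*(w)=u^*_{k^*(w)}(w)$. *)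

From HB Require Import structures.
From mathcomp Require Import all_boot all_order all_algebra.
From mathcomp Require Import all_classical all_reals all_analysis.
Set Implicit Arguments. Unset Strict Implicit. Unset Printing Implicit Defensive.
Import Order.TTheory GRing.Theory Num.Theory.
Import numFieldNormedType.Exports.
Local Open Scope classical_set_scope.
Local Open Scope ring_scope.

Section Defs.
Context {R : realType} {V : normedModType R}.

(* ip is a real inner product inducing the norm of V
   (with V complete, (V, ip) is a real Hilbert space). *)
Definition inner_product (ip : V -> V -> R) : Prop :=
  [/\ (forall x y, ip x y = ip y x),
      (forall (a : R) x y z, ip (a *: x + y) z = a * ip x z + ip y z) &
      (forall x, ip x x = `|x| ^+ 2)].

Definition lin_indep n (b : 'I_n -> V) : Prop :=
  forall c : 'I_n -> R, \sum_(i < n) c i *: b i = 0 -> forall i, c i = 0.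

Definition span n (b : 'I_n -> V) : set V :=
  [set v | exists c : 'I_n -> R, v = \sum_(i < n) c i *: b i].

Definition subspace_of_dim (E : set V) (n : nat) : Prop :=
  exists b : 'I_n -> V, lin_indep b /\ E = span b.

Definition orth_compl (ip : V -> V -> R) (W : set V) : set V :=
  [set v | forall w, W w -> ip v w = 0].

Definition orth_proj (ip : V -> V -> R) (W : set V) (P : V -> V) : Prop :=
  forall v, W (P v) /\ orth_compl ip W (v - P v).

(* dist(v, A) = inf_{a in A} ||v - a||  (= +oo if A is empty) *)
Definition dist_set (v : V) (A : set V) : \bar R :=
  ereal_inf [set (`|v - a|)%:E | a in A].

Definition affine (ubar : V) (Vbar : set V) : set V :=
  [set ubar + x | x in Vbar].

Definition fattening (M : set V) (s : R) : set V :=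
  [set v | (dist_set v M <= s%:E)%E].

Definition delta (ip : V -> V -> R) (W : set V) (M : set V) (s : R) : \bar R :=
  ereal_sup [set x | exists u v, [/\ fattening M s u, fattening M s v,
                      orth_compl ip W (u - v) & x = (`|u - v|)%:E]].

Definition mu_ratio (P : V -> V) (v : V) : \bar R :=
  if P v == 0 then +oo%E else (`|v| / `|P v|)%:E.

(* mu(E, W) with P = P_W; mu({0}, W) = 1, and mu(E,W) = +oo if E meets W^perp
   nontrivially (through mu_ratio) *)
Definition mu (P : V -> V) (E : set V) : \bar R :=
  if `[< E `<=` [set 0] >] then 1%E else ereal_sup (mu_ratio P @` (E `\ 0)).

End Defs.

From Pilot Require Import Defs.
From HB Require Import structures.
From mathcomp Require Import all_boot all_order all_algebra.
From mathcomp Require Import all_classical all_reals all_analysis.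
From mathcomp Require Import ring lra.
Import Order.TTheory GRing.Theory Num.Theory.
Import numFieldNormedType.Exports.
Local Open Scope classical_set_scope.
Local Open Scope ring_scope.
Set Implicit Arguments. Unset Strict Implicit.

(* Fix u in M and w = P_W u.  Since u lies in some M_k, the classical PBDW
   estimate gives ||u - u_k^*(w)|| <= mu_k dist(u, V_k) <= mu_k eps_k <= sigma,
   hence dist(u_k^*(w), M) <= sigma.  The selected estimator minimizes the
   surrogate, so r dist(u^*(w), M) <= S(u^*(w)) <= S(u_k^*(w)) <= R sigma, i.e.
   u^*(w) lies in M_{kappa sigma}; u lies in M, and u - u^*(w) lies in W^perp
   because both u and u^*(w) agree with the data w. *)

(* Cauchy-Schwarz in R^2: if a <= g + h with h <= sqrt(c^2 - 1) y, then
   a <= c sqrt(g^2 + y^2).  This is the scalar core of the PBDW estimate. *)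
Lemma le_scaled_hypot (R : realFieldType) (a g h y G c : R) :
  0 <= g -> 0 <= h -> 0 <= G -> 1 <= c ->
  a <= g + h -> h ^+ 2 <= (c ^+ 2 - 1) * y ^+ 2 -> G ^+ 2 = g ^+ 2 + y ^+ 2 ->
  a <= c * G.
Proof.
move=> g0 h0 G0 c1 agh hy Gy; apply: le_trans agh _.
rewrite -ler_sqr ?nnegrE ?addr_ge0 ?mulr_ge0 //; last lra.
set s := c ^+ 2 - 1 in hy *.
have s0 : 0 <= s by rewrite /s subr_ge0 -[1](expr1n _ 2) ler_sqr ?nnegrE //; lra.
suff cross : 2 * g * h <= s * g ^+ 2 + y ^+ 2.
  have cs : c ^+ 2 = s + 1 by rewrite /s subrK.
  by rewrite exprMn Gy cs; nra.
have [s_eq0|s_gt0] := eqVneq s 0.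
  have h_eq0 : h = 0.
    by apply/eqP; rewrite -sqrf_eq0 eq_le sqr_ge0 andbT; move: hy; rewrite s_eq0 mul0r.
  by rewrite h_eq0 s_eq0; nra.
have s_pos : 0 < s by rewrite lt_neqAle eq_sym s_gt0.
have := sqr_ge0 (s * g - h) => sq.
by rewrite -(ler_pM2l s_pos); nra.
Qed.

Section FiniteSpan.
Variables (R : realType) (V : normedModType R).

Lemma span_lin n (b : 'I_n -> V) a x y :
  Defs.span b x -> Defs.span b y -> Defs.span b (a *: x + y).
Proof.
move=> [c ->] [d ->]; exists (fun i => a * c i + d i).
rewrite scaler_sumr -big_split; apply: eq_bigr => i _ /=.
by rewrite scalerDl scalerA.
Qed.

Lemma span_sub n (b : 'I_n -> V) x y :
  Defs.span b x -> Defs.span b y -> Defs.span b (x - y).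
Proof. by move=> Sx Sy; have := span_lin (-1) Sy Sx; rewrite scaleN1r addrC. Qed.

Lemma span_gen n (b : 'I_n -> V) i : Defs.span b (b i).
Proof.
exists (fun j => (j == i)%:R); rewrite (bigD1 i) //= eqxx scale1r big1 ?addr0 //.
by move=> j /negbTE ->; rewrite scale0r.
Qed.

Lemma span_lift n (b : 'I_n.+1 -> V) y :
  Defs.span (fun j => b (lift ord0 j)) y -> Defs.span b y.
Proof.
move=> [c ->]; exists (fun i => if unlift ord0 i is Some j then c j else 0).
rewrite big_ord_recl /= unlift_none scale0r add0r; apply: eq_bigr => j _.
by rewrite liftK.
Qed.

End FiniteSpan.

Section InnerProduct.
Variables (R : realType) (V : normedModType R) (ip : V -> V -> R).
Hypothesis ipP : inner_product ip.

Lemma ipC x y : ip x y = ip y x.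
Proof. by case: ipP. Qed.

Lemma ip0l z : ip 0 z = 0.
Proof.
case: ipP => _ lin _; have := lin 1 0 0 z.
rewrite scaler0 addr0 mul1r => h; lra.
Qed.

Lemma ipDl x y z : ip (x + y) z = ip x z + ip y z.
Proof. by case: ipP => _ lin _; rewrite -[x]scale1r lin mul1r scale1r. Qed.

Lemma ipZl a x z : ip (a *: x) z = a * ip x z.
Proof. by case: ipP => _ lin _; rewrite -[a *: x]addr0 lin ip0l addr0. Qed.

Lemma ipBl x y z : ip (x - y) z = ip x z - ip y z.
Proof. by rewrite ipDl -scaleN1r ipZl mulN1r. Qed.

Lemma ipDr x y z : ip z (x + y) = ip z x + ip z y.
Proof. by rewrite !(ipC z) ipDl. Qed.

Lemma ipZr a x z : ip z (a *: x) = a * ip z x.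
Proof. by rewrite !(ipC z) ipZl. Qed.

Lemma ipBr x y z : ip z (x - y) = ip z x - ip z y.
Proof. by rewrite !(ipC z) ipBl. Qed.

Lemma ipxx x : ip x x = `|x| ^+ 2.
Proof. by case: ipP. Qed.

Lemma ip_eq0 x : ip x x = 0 -> x = 0.
Proof. by rewrite ipxx => /eqP; rewrite sqrf_eq0 normr_eq0 => /eqP. Qed.

Lemma normD2 x y : `|x + y| ^+ 2 = `|x| ^+ 2 + 2 * ip x y + `|y| ^+ 2.
Proof. by rewrite -!ipxx ipDl !ipDr (ipC y x); ring. Qed.

Lemma pythagoras x y : ip x y = 0 -> `|x + y| ^+ 2 = `|x| ^+ 2 + `|y| ^+ 2.
Proof. by move=> xy; rewrite normD2 xy mulr0 addr0. Qed.

Lemma ip_sumr n (c : 'I_n -> R) (b : 'I_n -> V) x :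
  ip x (\sum_(i < n) c i *: b i) = \sum_(i < n) c i * ip x (b i).
Proof.
elim/big_rec2: _ => [|i y1 y2 _ IH]; first by rewrite ipC ip0l.
by rewrite ipDr ipZr IH.
Qed.

Lemma orth_complD W x y :
  orth_compl ip W x -> orth_compl ip W y -> orth_compl ip W (x + y).
Proof. by move=> Ox Oy w Ww; rewrite ipDl Ox // Oy // addr0. Qed.

Lemma orth_complZ W a x : orth_compl ip W x -> orth_compl ip W (a *: x).
Proof. by move=> Ox w Ww; rewrite ipZl Ox // mulr0. Qed.

Lemma orth_compl_diff W x y w :
  orth_compl ip W (x - w) -> orth_compl ip W (y - w) -> orth_compl ip W (x - y).
Proof.
move=> Ox Oy; have -> : x - y = (x - w) + (-1) *: (y - w).
  by rewrite scaleN1r opprB addrA subrK.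
by apply: orth_complD => //; apply: orth_complZ.
Qed.

Lemma orth_span n (b : 'I_n -> V) x y :
  (forall i, ip x (b i) = 0) -> Defs.span b y -> ip x y = 0.
Proof. by move=> Ox [c ->]; rewrite ip_sumr big1 // => i _; rewrite Ox mulr0. Qed.

(* Existence of the orthogonal projection onto a finite span, by induction on the
   number of generators (one Gram-Schmidt step); no independence is needed. *)
Lemma span_proj n (b : 'I_n -> V) v :
  exists2 p, Defs.span b p & forall i, ip (v - p) (b i) = 0.
Proof.
elim: n b v => [|n IH] b v.
  by exists 0 => [|[]//]; exists (fun _ => 0); rewrite big_ord0.
pose b' j := b (lift ord0 j).
have [pv Spv Ov] := IH b' v; have [pe Spe Oe] := IH b' (b ord0).
pose e := b ord0 - pe.
have Ee : b ord0 = e + pe by rewrite subrK.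
have Se : Defs.span b e := span_sub (span_gen b ord0) (span_lift Spe).
have {}Oe j : ip e (b' j) = 0 := Oe j.
clearbody e.
have Ov_pe : ip (v - pv) pe = 0 by apply: orth_span Spe.
have Oe_pe : ip e pe = 0 by apply: orth_span Spe.
have [e0|en0] := eqVneq (ip e e) 0.
  exists pv; first exact: span_lift.
  move=> i; case: (unliftP ord0 i) => [j ->|->]; first exact: Ov.
  by rewrite Ee (ip_eq0 e0) add0r.
pose c := ip (v - pv) e / ip e e.
have ce : c * ip e e = ip (v - pv) e by rewrite mulfVK.
exists (c *: e + pv).
  exact: span_lin Se (span_lift Spv).
move=> i; rewrite opprD addrA addrAC ipBl ipZl.
case: (unliftP ord0 i) => [j ->|->].
  by rewrite Ov (Oe j) mulr0 subrr.
by rewrite Ee !ipDr Ov_pe Oe_pe !addr0 ce subrr.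
Qed.

Lemma nearest_point n (b : 'I_n -> V) ubar v :
  exists p, [/\ affine ubar (Defs.span b) p,
    forall y, Defs.span b y -> ip (v - p) y = 0 &
    dist_set v (affine ubar (Defs.span b)) = (`|v - p|)%:E].
Proof.
have [q Sq Oq] := span_proj b (v - ubar).
have Op : forall y, Defs.span b y -> ip (v - (ubar + q)) y = 0.
  by move=> y; rewrite opprD addrA; apply: orth_span.
exists (ubar + q); split=> //; first by exists q.
apply/eqP; rewrite eq_le; apply/andP; split.
  by apply: ereal_inf_lbound; exists (ubar + q) => //; exists q.
apply: le_ereal_inf_tmp => _ [_ [y Sy <-] <-]; rewrite lee_fin.
have -> : v - (ubar + y) = (v - (ubar + q)) + (q - y) by rewrite !opprD !addrA subrK.
by rewrite -ler_sqr ?nnegrE // (pythagoras (Op _ (span_sub Sq Sy))) lerDl sqr_ge0.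
Qed.

Lemma orth_of_min_norm f e : (forall t : R, `|f| <= `|f + t *: e|) -> ip f e = 0.
Proof.
move=> fmin; set c := ip f e; set N := `|e| ^+ 2.
have N0 : 0 <= N by apply: sqr_ge0.
pose t := - c / (N + 1).
have tN : t * (N + 1) = - c by rewrite mulfVK // gt_eqF // ltr_wpDl.
have := fmin t; rewrite -ler_sqr ?nnegrE // normD2 -(ipxx (t *: e)) ipZl !ipZr ipxx.
rewrite -/c -/N => le1.
have : 0 <= (N + 1) ^+ 2 * (2 * (t * c) + t * (t * N)) by apply: mulr_ge0; [apply: sqr_ge0|lra].
have -> : (N + 1) ^+ 2 * (2 * (t * c) + t * (t * N)) =
          2 * c * (t * (N + 1)) * (N + 1) + (t * (N + 1)) ^+ 2 * N by ring.
rewrite tN => h; apply/eqP; rewrite -sqrf_eq0 eq_le sqr_ge0 andbT; nra.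
Qed.

Lemma estimator_residual_orth (W A : set V) us w p :
  orth_compl ip W (us - w) ->
  (forall v, orth_compl ip W (v - w) -> (dist_set us A <= dist_set v A)%E) ->
  A p -> dist_set us A = (`|us - p|)%:E ->
  forall eta, orth_compl ip W eta -> ip (us - p) eta = 0.
Proof.
move=> Ous usmin Ap Dp eta Oeta; apply: orth_of_min_norm => t.
have Ov : orth_compl ip W (us + t *: eta - w).
  by rewrite addrAC; apply: orth_complD => //; apply: orth_complZ.
rewrite -lee_fin -Dp addrAC; apply: le_trans (usmin _ Ov) _.
by apply: ereal_inf_lbound; exists p.
Qed.

Lemma norm_orth_proj_le W PW x : orth_proj ip W PW -> `|PW x| <= `|x|.
Proof.
move=> PWP; have [WPx Ox] := PWP x.
rewrite -ler_sqr ?nnegrE // -[x in _ <= `|x| ^+ 2](subrK (PW x)) addrC pythagoras.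
  by rewrite lerDl sqr_ge0.
by rewrite ipC Ox.
Qed.

Lemma mu_bound W PW (E : set V) c : orth_proj ip W PW -> mu PW E = c%:E ->
  1 <= c /\ forall x, E x -> `|x| <= c * `|PW x|.
Proof.
move=> PWP; rewrite /mu; case: asboolP => [E0 [<-]|E0 muE].
  by split=> // x /E0 ->; rewrite normr0 mul1r.
have ratio x : E x -> x != 0 -> `|x| <= c * `|PW x| /\ 0 < `|PW x|.
  move=> Ex x0; have : (mu_ratio PW x <= c%:E)%E.
    by rewrite -muE; apply: ereal_sup_ubound; exists x => //; split=> // /= /eqP; apply/negP.
  rewrite /mu_ratio; case: eqP => // /eqP Px0; rewrite lee_fin => le_ratio.
  have Px_gt0 : 0 < `|PW x| by rewrite normr_gt0.
  by split=> //; rewrite -ler_pdivrMr.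
have [z Ez nz] : exists2 x, E x & x != 0.
  apply: contra_notP E0 => E0 x Ex /=.
  by have [//|x0] := eqVneq x 0; exfalso; apply: E0; exists x.
split.
  have [le_ratio Px_gt0] := ratio z Ez nz.
  have := norm_orth_proj_le z PWP; nra.
move=> x Ex; have [->|x0] := eqVneq x 0; last by case: (ratio x Ex x0).
rewrite normr0 mulr_ge0 //.
have [le_ratio Px_gt0] := ratio z Ez nz; have := norm_orth_proj_le z PWP; nra.
Qed.

(* Here z = u - u^* lies in W^perp,
   f = u^* - p is orthogonal to W^perp and to x = p - q in the model space, and
   z + f + x = u - q; splitting x = P_W x + (x - P_W x) and using
   ||x|| <= c ||P_W x|| gives ||z|| <= c ||u - q||. *)
Lemma orth_error_bound W PW c z f x :
  orth_proj ip W PW -> orth_compl ip W z ->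
  (forall eta, orth_compl ip W eta -> ip f eta = 0) -> ip f x = 0 ->
  `|x| <= c * `|PW x| -> 1 <= c ->
  `|z| <= c * `|z + f + x|.
Proof.
move=> PWP Oz Of fx xc c1; have [WPx Oh] := PWP x.
set h := x - PW x in Oh; set y := f + PW x.
have Oy eta : orth_compl ip W eta -> ip y eta = 0.
  by move=> Oeta; rewrite ipDl ?Of // ipC Oeta // add0r.
have fPx : ip f (PW x) = 0.
  by rewrite -[PW x](subKr x) -/h ipBr ?fx ?Of // subr0.
have split_sum : z + f + x = (z + h) + y by rewrite addrACA subrK.
have G2 : `|z + f + x| ^+ 2 = `|z + h| ^+ 2 + `|y| ^+ 2.
  by rewrite split_sum pythagoras // ipC Oy //; apply: orth_complD.
have y2 : `|y| ^+ 2 = `|f| ^+ 2 + `|PW x| ^+ 2 by rewrite pythagoras.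
have x2 : `|x| ^+ 2 = `|PW x| ^+ 2 + `|h| ^+ 2.
  by rewrite -pythagoras ?subrKC // ipC Oh.
have h2 : `|h| ^+ 2 <= (c ^+ 2 - 1) * `|y| ^+ 2.
  have : `|x| ^+ 2 <= c ^+ 2 * `|PW x| ^+ 2.
    by rewrite -exprMn ler_sqr ?nnegrE ?mulr_ge0 //; lra.
  have c2 : 0 <= c ^+ 2 - 1 by rewrite subr_ge0; nra.
  have := mulr_ge0 c2 (sqr_ge0 `|f|); rewrite y2; nra.
apply: le_scaled_hypot h2 G2 => //.
by rewrite -[z in `|z| <= _](addrK h) ler_normB.
Qed.

Lemma pbdw_error n (b : 'I_n -> V) W PW ubar c eps (u us w : V) :
  orth_proj ip W PW -> mu PW (Defs.span b) = c%:E ->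
  orth_compl ip W (u - w) -> orth_compl ip W (us - w) ->
  (forall v, orth_compl ip W (v - w) ->
     (dist_set us (affine ubar (Defs.span b)) <= dist_set v (affine ubar (Defs.span b)))%E) ->
  (dist_set u (affine ubar (Defs.span b)) <= eps%:E)%E -> `|u - us| <= c * eps.
Proof.
move=> PWP muE Ou Ous usmin ueps.
have [c1 cE] := mu_bound PWP muE.
have [q [Aq _ Dq]] := nearest_point b ubar u.
have [p [Ap Op Dp]] := nearest_point b ubar us.
have Spq : Defs.span b (p - q).
  case: Ap => yp Syp <-; case: Aq => yq Syq <-.
  by rewrite opprD addrACA subrr add0r; apply: span_sub.
have decomp : u - q = (u - us) + (us - p) + (p - q) by rewrite !addrA !subrK.
apply: (@le_trans _ _ (c * `|u - q|)).
  rewrite decomp; apply: orth_error_bound PWP _ _ _ (cE _ Spq) c1.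
  - exact: orth_compl_diff Ou Ous.
  - exact: estimator_residual_orth Ous usmin Ap Dp.
  - exact: Op.
by rewrite ler_wpM2l ?(le_trans _ c1) // -lee_fin -Dq.
Qed.

End InnerProduct.

Section Selection.
Variables (R : realType) (V : normedModType R).

Lemma dist_set_le (M : set V) v x : M x -> (dist_set v M <= (`|v - x|)%:E)%E.
Proof. by move=> Mx; apply: ereal_inf_lbound; exists x. Qed.

Lemma dist_set_fin (M : set V) v x : M x ->
  exists2 d, dist_set v M = d%:E & 0 <= d.
Proof.
move=> Mx; have : (0 <= dist_set v M)%E.
  by apply: le_ereal_inf_tmp => _ [a _ <-]; rewrite lee_fin.
move: (dist_set_le v Mx); case: (dist_set v M) => [d| |] //= _ d0.
by exists d; rewrite // -lee_fin.
Qed.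

Lemma worst_case_le_delta (ip : V -> V -> R) W (M : set V) (est : V -> V) s :
  0 <= s ->
  (forall x, M x -> orth_compl ip W (x - est x) /\ (dist_set (est x) M <= s%:E)%E) ->
  (ereal_sup [set (`|x - est x|)%:E | x in M] <= delta ip W M s)%E.
Proof.
move=> s0 estP; apply: ge_ereal_sup => _ [x Mx <-].
have [Oxe de] := estP x Mx.
apply: ereal_sup_ubound; exists x, (est x); split => //.
by rewrite /fattening /= (le_trans (dist_set_le x Mx)) // subrr normr0.
Qed.

Lemma surrogate_selection (M : set V) (S : V -> R) r Rc us uk s x :
  M x -> 0 < r -> r <= Rc ->
  (forall v, (r%:E * dist_set v M <= (S v)%:E)%E /\ ((S v)%:E <= Rc%:E * dist_set v M)%E) ->
  S us <= S uk -> (dist_set uk M <= s%:E)%E -> (dist_set us M <= (Rc / r * s)%:E)%E.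
Proof.
move=> Mx r0 rRc Sdist le_S dk_s.
have [ds dsE ds0] := dist_set_fin us Mx; have [dk dkE dk0] := dist_set_fin uk Mx.
have [rds _] := Sdist us; have [_ Sdk] := Sdist uk.
rewrite dkE lee_fin in dk_s; rewrite dkE -EFinM lee_fin in Sdk.
rewrite dsE -EFinM lee_fin in rds; rewrite dsE lee_fin mulrAC ler_pdivlMr //; nra.
Qed.

End Selection.

Theorem theorem3p2 (R : realType) (V : completeNormedModType R)
  (ip : V -> V -> R)
  (d : nat) (Y : set 'rV[R]_d) (u : 'rV[R]_d -> V)
  (m : nat) (W : set V) (PW : V -> V)
  (K : nat) (Mk : 'I_K -> set V) (ubar : 'I_K -> V) (Vbar : 'I_K -> set V)
  (n : 'I_K -> nat) (eps : 'I_K -> R) (muk : 'I_K -> R) (sigma : R)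
  (ustar : 'I_K -> V -> V)
  (S : V -> R) (r Rc : R) (kstar : V -> 'I_K) :
  inner_product ip ->
  compact Y -> {within Y, continuous u} ->
  subspace_of_dim W m -> orth_proj ip W PW ->
  u @` Y = \bigcup_(k in [set: 'I_K]) Mk k ->
  (forall k, subspace_of_dim (Vbar k) (n k) /\ (n k <= m)%N) ->
  (forall k x, Mk k x ->
     (dist_set x (affine (ubar k) (Vbar k)) <= (eps k)%:E)%E) ->
  (forall k, mu PW (Vbar k) = (muk k)%:E) ->
  0 < sigma ->
  (forall k, muk k * eps k <= sigma) ->
  (* PBDW estimators: u_k^*(w) = argmin { dist(v, V_k) : v in w + W^perp } *)
  (forall k w, W w ->
     orth_compl ip W (ustar k w - w) /\
     (forall v, orth_compl ip W (v - w) ->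
        (dist_set (ustar k w) (affine (ubar k) (Vbar k))
         <= dist_set v (affine (ubar k) (Vbar k)))%E)) ->
  (* surrogate *)
  0 < r -> r <= Rc ->
  (forall v, 0 <= S v) ->
  (forall v, (r%:E * dist_set v (u @` Y) <= (S v)%:E)%E /\
             ((S v)%:E <= Rc%:E * dist_set v (u @` Y))%E) ->
  (* surrogate model selection *)
  (forall w, W w -> forall k, S (ustar (kstar w) w) <= S (ustar k w)) ->
  (ereal_sup [set (`|x - ustar (kstar (PW x)) (PW x)|)%:E | x in u @` Y]
     <= delta ip W (u @` Y) (Rc / r * sigma))%E
  /\
  (* idealized selection: S = dist, r = R = 1 *)
  (forall kd : V -> 'I_K,
     (forall w, W w -> forall k,
        (dist_set (ustar (kd w) w) (u @` Y) <= dist_set (ustar k w) (u @` Y))%E) ->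
     (ereal_sup [set (`|x - ustar (kd (PW x)) (PW x)|)%:E | x in u @` Y]
        <= delta ip W (u @` Y) sigma)%E).
Proof.
move=> ipP _ _ _ PWP M_union Vdim Meps muE sigma0 mueps ustarP r0 rRc _ Sdist kstarP.
set M := u @` Y.
have data_consistent ks x : M x -> orth_compl ip W (x - ustar ks (PW x)).
  move=> _; have [WPx Ox] := PWP x.
  exact: (orth_compl_diff ipP Ox (ustarP ks _ WPx).1).
(* the estimate of the model M_k containing x is within sigma of M *)
have near_sigma x : M x -> exists k, (dist_set (ustar k (PW x)) M <= sigma%:E)%E.
  move=> Mx; have [k _ Mkx] : (\bigcup_(k in [set: 'I_K]) Mk k) x by rewrite -M_union.
  have [WPx Ox] := PWP x; have [Ous usmin] := ustarP k (PW x) WPx.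
  have [[b [_ Vb]] _] := Vdim k.
  exists k; apply: le_trans (dist_set_le _ Mx) _; rewrite lee_fin distrC.
  have muEk := muE k; have Mepsk := Meps k x Mkx; rewrite Vb in usmin muEk Mepsk.
  exact: le_trans (pbdw_error ipP PWP muEk Ox Ous usmin Mepsk) (mueps k).
split.
  apply: worst_case_le_delta => [|x Mx]; first by rewrite !mulr_ge0 ?invr_ge0 //; lra.
  split; first exact: data_consistent.
  have [k dk] := near_sigma x Mx; have [WPx _] := PWP x.
  exact: surrogate_selection Mx r0 rRc Sdist (kstarP _ WPx k) dk.
move=> kd kdP; apply: worst_case_le_delta => [|x Mx]; first lra.
split; first exact: data_consistent.
have [k dk] := near_sigma x Mx; have [WPx _] := PWP x.
exact: le_trans (kdP _ WPx k) dk.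
Qed.
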